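(* Let $r\ge 2$ and $m$ be integers with $0\le 2m\le r$, $n=2r-4m$, and let $f:S^2(S^r(\mathbb{C}^2))\to S^{n}(\mathbb{C}^2)$ be an $\mathfrak{sl}_2(\mathbb{C})$-equivariant linear map, written $f=\sum_{k=0}^n q_k w_k$. Let $k,i$ be integers with $0\le k\le r-2m$ and $0\le i\le r$, and let $j=2m+k-i$. Then $$q_k(x_ix_j)=q_{n-k}(x_{r-i}x_{r-j}),$$ with the convention $x_l=0$ for $l\notin[0,r]$.
   Context: $\mathfrak{sl}_2(\mathbb{C})$ has basis $X=\begin{pmatrix}0&1\\0&0\end{pmatrix}$, $H=\begin{pmatrix}1&0\\0&-1\end{pmatrix}$, $Y=\begin{pmatrix}0&0\\1&0\end{pmatrix}$, acting on the irreducible modules $S^d(\mathbb{C}^2)$. Let $x_0\in S^r(\mathbb{C}^2)$ be a highest weight vector and $x_i=Y^ix_0/i!$ ($0\le i\le r$), so $Yx_i=(i+1)x_{i+1}$, $Xx_i=(r-i+1)x_{i-1}$, $Hx_i=(r-2i)x_i$. Let $w_0\in S^n(\mathbb{C}^2)$ be a highest weight vector and $w_k=Y^kw_0/k!$ ($0\le k\le n$). Writing $f=\sum_{k=0}^n q_kw_k$ means $f(u)=\sum_k q_k(u)w_k$ for linear forms $q_k$ on $S^2(S^r(\mathbb{C}^2))$; $q_k(x_ix_j)$ is the value on the product $x_ix_j$. *)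

(* The base field C is modelled as R[i] (complex numbers over a
   real-closed field); with R : realType (Dedekind-complete ordered field = the
   reals), R[i] is the field of complex numbers. *)
From mathcomp Require Import all_boot all_order all_algebra.
From mathcomp Require Import reals complex.
Import GRing.Theory Num.Theory.
Local Open Scope ring_scope.

Notation CC R := (complex R).

(* A linear map f : S^2(S^r C^2) -> S^n C^2, f = sum_k q_k w_k, is given by the
   numbers  q k i j = q_k(x_i x_j)  for 0 <= k <= n, 0 <= i,j <= r
   (the products x_i x_j, i <= j, form a basis of S^2(S^r C^2)).
   Values of q outside these ranges are irrelevant: [qx] masks them to 0,
   which implements the convention x_l = 0 for l outside [0,r] (and w_k = 0
   for k outside [0,n]). *)
Definition qx {R : realType} (r n : nat) (q : nat -> nat -> nat -> CC R)
    (k i j : nat) : CC R :=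
  if [&& (k <= n)%N, (i <= r)%N & (j <= r)%N] then q k i j else 0.

Definition qz {R : realType} (r n : nat) (q : nat -> nat -> nat -> CC R)
    (k : nat) (i j : int) : CC R :=
  match i, j with
  | Posz i', Posz j' => qx r n q k i' j'
  | _, _ => 0
  end.

(* q is a well-defined family of linear forms on S^2(S^r): x_i x_j = x_j x_i *)
Definition sym_forms {R : realType} (r n : nat) (q : nat -> nat -> nat -> CC R) :=
  forall k i j, (k <= n)%N -> (i <= r)%N -> (j <= r)%N -> q k i j = q k j i.

(* Action of sl_2 on S^d(C^2) in the basis w_0..w_d, on coordinate vectors v
   (v k = coefficient of w_k):  Y w_k = (k+1) w_{k+1},  X w_k = (d-k+1) w_{k-1},
   H w_k = (d-2k) w_k. *)
Definition actY {R : realType} (d : nat) (v : nat -> CC R) (k : nat) : CC R :=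
  if k is k'.+1 then k%:R * v k' else 0.
Definition actX {R : realType} (d : nat) (v : nat -> CC R) (k : nat) : CC R :=
  (d - k)%:R * v k.+1.
Definition actH {R : realType} (d : nat) (v : nat -> CC R) (k : nat) : CC R :=
  (d%:R - (2 * k)%:R) * v k.

(* k-th coordinate of f(A . (x_i x_j)) for A = Y, X, H, where the action on
   S^2(S^r) is A(x_i x_j) = (A x_i) x_j + x_i (A x_j) and
   Y x_i = (i+1) x_{i+1}, X x_i = (r-i+1) x_{i-1}, H x_i = (r-2i) x_i. *)
Definition fY {R : realType} (r n : nat) q (i j k : nat) : CC R :=
  i.+1%:R * qx r n q k i.+1 j + j.+1%:R * qx r n q k i j.+1.
Definition fX {R : realType} (r n : nat) q (i j k : nat) : CC R :=
  (if i is i'.+1 then (r - i')%:R * qx r n q k i' j else 0) +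
  (if j is j'.+1 then (r - j')%:R * qx r n q k i j' else 0).
Definition fH {R : realType} (r n : nat) q (i j k : nat) : CC R :=
  ((r%:R - (2 * i)%:R) + (r%:R - (2 * j)%:R)) * qx r n q k i j.

(* f is sl_2-equivariant: f(A u) = A f(u) for A in {X, H, Y} (a basis of sl_2)
   and u ranging over the basis x_i x_j of S^2(S^r C^2). *)
Definition sl2_equivariant {R : realType} (r n : nat) (q : nat -> nat -> nat -> CC R) :=
  forall i j k, (i <= r)%N -> (j <= r)%N -> (k <= n)%N ->
    [/\ fY r n q i j k = actY n (fun l => qx r n q l i j) k,
        fX r n q i j k = actX n (fun l => qx r n q l i j) k &
        fH r n q i j k = actH n (fun l => qx r n q l i j) k].

From mathcomp Require Import all_boot all_order all_algebra.
From mathcomp Require Import reals complex.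
From mathcomp Require Import zify.
Set Implicit Arguments.
Unset Strict Implicit.
Unset Printing Implicit Defensive.
Import GRing.Theory Num.Theory.
Local Open Scope ring_scope.

(* The symmetry is the Weyl reflection of sl_2 read on the coefficients of f:
   it exchanges x_i with x_{r-i}, w_k with w_{n-k}, and X with Y.  In the
   middle weight space k = n/2 the H-weights force i + j = r, so the identity
   there is just the commutativity x_i x_j = x_j x_i.  Comparing f(Y u) = Y f(u)
   with the reflected relation f(X u') = X f(u') then pushes the identity from
   level k down to level k - 1. *)

(* One summand of the Y-action at index i equals the matching summand of the
   X-action at the reflected index r - i. *)
Lemma raise_reflect (V : nzRingType) (r i : nat) (f g : nat -> V) :
  (forall a, (a <= r)%N -> f a = g (r - a)%N) ->
  (forall a, (r < a)%N -> f a = 0) -> (i <= r)%N ->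
  i.+1%:R * f i.+1 = if (r - i)%N is i'.+1 then (r - i')%:R * g i' else 0.
Proof.
move=> fg f0 ir; case: (ltnP i r) => [lt_ir | le_ri].
- have -> : (r - i = (r - i.+1).+1)%N by lia.
  by rewrite fg // (_ : r - (r - i.+1) = i.+1)%N //; lia.
- by rewrite (_ : r - i = 0)%N ?f0 ?mulr0 //; lia.
Qed.

Section Reflection.
Variables (R : realType) (r n : nat) (q : nat -> nat -> nat -> CC R).
Hypothesis equiv_q : sl2_equivariant r n q.

Lemma qx_out k i j :
  ~~ [&& (k <= n)%N, (i <= r)%N & (j <= r)%N] -> qx r n q k i j = 0.
Proof. by rewrite /qx => /negbTE ->. Qed.

Lemma qx_sym k i j : sym_forms r n q -> qx r n q k i j = qx r n q k j i.
Proof.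
rewrite /qx => symq.
by case kn: (k <= n)%N; case ir: (i <= r)%N; case jr: (j <= r)%N => //=; apply: symq.
Qed.

Lemma qx_weight k i j :
  (2 * r + 2 * k != n + 2 * (i + j))%N -> qx r n q k i j = 0.
Proof.
move=> weight_ne.
have [/and3P[ir jr kn] | out] := boolP [&& (i <= r)%N, (j <= r)%N & (k <= n)%N].
- have [_ _] := equiv_q ir jr kn; rewrite /fH /actH => /eqP.
  rewrite -subr_eq0 -mulrBl mulf_eq0 subr_eq0 addrACA -opprD -!natrD.
  rewrite subr_eq addrAC eq_sym subr_eq -!natrD eqr_nat.
  move=> /orP[/eqP|/eqP //]; lia.
- by rewrite qx_out //; apply: contra out => /and3P[-> -> ->].
Qed.

Definition flip_invariant (k : nat) :=
  forall i j, (i <= r)%N -> (j <= r)%N ->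
    qx r n q k i j = qx r n q (n - k)%N (r - i)%N (r - j)%N.

Lemma fY_flip k i j : flip_invariant k -> (i <= r)%N -> (j <= r)%N ->
  fY r n q i j k = fX r n q (r - i)%N (r - j)%N (n - k)%N.
Proof.
move=> flip_k ir jr; rewrite /fY /fX; congr (_ + _).
- apply: (raise_reflect (f := fun a => qx r n q k a j)
                         (g := fun a => qx r n q (n - k) a (r - j))) => // a.
  + by move=> ar; apply: flip_k.
  + by move=> ra; rewrite qx_out //; apply/negP => /and3P[_ ? _]; lia.
- apply: (raise_reflect (f := fun b => qx r n q k i b)
                         (g := fun b => qx r n q (n - k) (r - i) b)) => // b.
  + by move=> br; apply: flip_k.
  + by move=> rb; rewrite qx_out //; apply/negP => /and3P[_ _ ?]; lia.
Qed.

Lemma flip_invariant_pred k :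
  (0 < k <= n)%N -> flip_invariant k -> flip_invariant k.-1.
Proof.
case: k => // k /andP[_ kn] flip_k i j ir jr /=.
have [eqY _ _] := equiv_q ir jr kn.
have [_ eqX _] := equiv_q (leq_subr i r) (leq_subr j r) (leq_subr k.+1 n).
move: eqY; rewrite fY_flip // eqX /actX /actY.
rewrite (_ : n - (n - k.+1) = k.+1)%N; last by lia.
rewrite (_ : (n - k.+1).+1 = n - k)%N; last by lia.
move=> eq_k; apply: (mulfI (x := k.+1%:R)); first by rewrite pnatr_eq0.
by rewrite -eq_k.
Qed.

Lemma flip_invariant_half h :
  n = (2 * h)%N -> sym_forms r n q -> flip_invariant h.
Proof.
move=> n2h symq i j ir jr; rewrite (_ : n - h = h)%N; last by lia.
have [ijr | ijr] := eqVneq (i + j)%N r.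
- by rewrite (_ : r - i = j)%N 1?(_ : r - j = i)%N 1?qx_sym //; lia.
- by rewrite !qx_weight //; apply/negP => /eqP; lia.
Qed.

Lemma flip_invariant_le_half h k :
  n = (2 * h)%N -> sym_forms r n q -> (k <= h)%N -> flip_invariant k.
Proof.
move=> n2h symq kh; rewrite -(subKn kh).
elim: (h - k)%N (leq_subr k h) => [|t IHt] th.
- by rewrite subn0; exact: flip_invariant_half.
- rewrite (_ : h - t.+1 = (h - t).-1)%N; last by lia.
  by apply: flip_invariant_pred; [lia | apply: IHt; lia].
Qed.

Lemma qz_flip k i (j : int) : flip_invariant k -> (i <= r)%N ->
  qz r n q k i j = qz r n q (n - k) (r%:Z - i%:Z) (r%:Z - j).
Proof.
move=> flip_k ir; rewrite subzn //.
case: j => [j | j]; last first.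
  rewrite NegzE opprK -PoszD /= qx_out //.
  by apply/negP => /and3P[_ _ ?]; lia.
have [jr | rj] := leqP j r.
- by rewrite subzn //= flip_k.
- have -> : r%:Z - j%:Z = Negz (j - r.+1).
    by rewrite NegzE -opprB subzn ?(ltnW rj) // subnSK.
  by rewrite /= qx_out //; apply/negP => /and3P[_ _ ?]; lia.
Qed.

End Reflection.

Theorem mainTheorem4 (R : realType) (r m n : nat) (q : nat -> nat -> nat -> CC R) :
  (2 <= r)%N -> (2 * m <= r)%N -> n = (2 * r - 4 * m)%N ->
  sym_forms r n q -> sl2_equivariant r n q ->
  forall k i : nat, (k <= r - 2 * m)%N -> (i <= r)%N ->
  let j : int := (2 * m + k)%:Z - i%:Z in
  qz r n q k i j = qz r n q (n - k) (r%:Z - i%:Z) (r%:Z - j).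
Proof.
(* Neither r >= 2 nor the particular value of j is needed: the identity holds
   for every j, and the weight condition only singles out the nonzero entries. *)
move=> _ mr n_def symq equiv_q k i kh ir j.
apply: qz_flip => //.
by apply: (flip_invariant_le_half equiv_q (h := (r - 2 * m)%N)) => //; lia.
Qed.
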